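(* Fix an attacker label $A\in\mathcal{L}$. For all partial bijections $\beta$, all initial configurations $c_1,c_2$ of $\lambda^{dCG}$ extended with flow-sensitive references (either both of the form $\langle\Sigma,\mu,pc,e\rangle$ evaluated by the forcing semantics or both of the form $\langle\Sigma,\mu,pc,t\rangle$ evaluated by the thunk semantics) and environments $\theta_1,\theta_2$ with $\vdash\mathbf{Valid}(c_1,\theta_1)$, $\vdash\mathbf{Valid}(c_2,\theta_2)$, $c_1\approx^\beta_A c_2$ and $\theta_1\approx^\beta_A\theta_2$: if $c_1\Downarrow^{\theta_1}c_1'$ and $c_2\Downarrow^{\theta_2}c_2'$, then there exists a partial bijection $\beta'\supseteq\beta$ such that $c_1'\approx^{\beta'}_A c_2'$.
   Context: Fix a lattice $(\mathcal{L},\sqsubseteq,\sqcup)$ of labels. The calculus has types $\tau::=\mathbf{unit}\mid\tau_1\to\tau_2\mid\tau_1+\tau_2\mid\tau_1\times\tau_2\mid\mathcal{L}\mid\mathbf{LIO}\,\tau\mid\mathbf{Labeled}\,\tau\mid\mathbf{Ref}\,s\,\tau$, $s\in\{I,S\}$ (standard simple typing; the tag $s$ determines which reference rules apply), values $v::=()\mid(x.e,\theta)\mid\mathbf{inl}(v)\mid\mathbf{inr}(v)\mid(v_1,v_2)\mid\ell\mid\mathbf{Labeled}\,\ell\,v\mid(t,\theta)\mid n_\ell\mid n$ ($n_\ell$ flow-insensitive reference into memory $\ell$, $n$ flow-sensitive heap address), expressions $e::=x\mid\lambda x.e\mid e_1\,e_2\mid()\mid\ell\mid(e_1,e_2)\mid\mathbf{fst}(e)\mid\mathbf{snd}(e)\mid\mathbf{inl}(e)\mid\mathbf{inr}(e)\mid\mathbf{case}(e,x.e_1,x.e_2)\mid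 e_1\sqsubseteq^{?}e_2\mid t$, thunks $t::=\mathbf{return}(e)\mid\mathbf{bind}(e,x.e)\mid\mathbf{unlabel}(e)\mid\mathbf{toLabeled}(e)\mid\mathbf{labelOf}(e)\mid\mathbf{getLabel}\mid\mathbf{taint}(e)\mid\mathbf{new}(e)\mid\,!e\mid e_1:=e_2\mid\mathbf{labelOfRef}(e)$; environments are finite maps from variables to values. Memories are lists of values, a store $\Sigma$ maps each label to a memory, a heap $\mu$ is a list of values of the form $\mathbf{Labeled}\,\ell\,v$; $|X|$, $X[n]$, $X[n\mapsto y]$ denote length, $n$-th entry (from 0), replacement (append if $n=|X|$). Pure semantics $e\Downarrow^\theta v$: $x\Downarrow\theta(x)$; $()\Downarrow()$; $\ell\Downarrow\ell$; $\lambda x.e\Downarrow(x.e,\theta)$; $t\Downarrow(t,\theta)$; $e_1\,e_2\Downarrow v$ if $e_1\Downarrow^\theta(x.e,\theta')$, $e_2\Downarrow^\theta v_2$, $e\Downarrow^{\theta'[x\mapsto v_2]}v$; pairs, projections, injections componentwise; $\mathbf{case}(e,x.e_1,x.e_2)\Downarrow v$ if $e\Downarrow\mathbf{inl}(v_1)$ and $e_1\Downarrow^{\theta[x\mapsto v_1]}v$, or $e\Downarrow\mathbf{inr}(v_2)$ and $e_2\Downarrow^{\theta[x\mapsto v_2]}v$; $e_1\sqsubseteq^?e_2$ evaluates both to labels $\ell_1,\ell_2$ and yields $\mathbf{inl}(())$ if $\ell_1\sqsubseteq\ell_2$, else $\mathbf{inr}(())$. Forcing semantics: $\langle\Sigma,\mu,pc,e\rangle\Downarrow^\theta\langle\Sigma',\mu',pc',v\rangle$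 iff $e\Downarrow^\theta(t,\theta')$ and $\langle\Sigma,\mu,pc,t\rangle\Downarrow^{\theta'}\langle\Sigma',\mu',pc',v\rangle$. Thunk semantics (store/heap unchanged unless stated): (Return) $e\Downarrow^\theta v$ gives $\langle\Sigma,\mu,pc,v\rangle$. (Bind) forcing $e_1$ from $\langle\Sigma,\mu,pc\rangle$ gives $\langle\Sigma',\mu',pc',v_1\rangle$, forcing $e_2$ in $\theta[x\mapsto v_1]$ from $\langle\Sigma',\mu',pc'\rangle$ gives the result. (ToLabeled) forcing $e$ gives $\langle\Sigma',\mu',pc',v\rangle$; result $\langle\Sigma',\mu',pc,\mathbf{Labeled}\,pc'\,v\rangle$. (Unlabel) $e\Downarrow\mathbf{Labeled}\,\ell\,v$; result $\langle\Sigma,\mu,pc\sqcup\ell,v\rangle$. (LabelOf) $e\Downarrow\mathbf{Labeled}\,\ell\,v$; result $\langle\Sigma,\mu,pc\sqcup\ell,\ell\rangle$. (GetLabel) $\langle\Sigma,\mu,pc,pc\rangle$. (Taint) $e\Downarrow\ell$; result $\langle\Sigma,\mu,pc\sqcup\ell,()\rangle$. For $\mathbf{Ref}\,I$: (New) $e\Downarrow\mathbf{Labeled}\,\ell\,v$, $pc\sqsubseteq\ell$, $n=|\Sigma(\ell)|$: result $n_\ell$ with store $\Sigma[\ell\mapsto\Sigma(\ell)[n\mapsto v]]$; (Read) $e\Downarrow n_\ell$, $\Sigma(\ell)[n]=v$: result $\langle\Sigma,\mu,pc\sqcup\ell,v\rangle$; (Write) $e_1\Downarrow n_{\ell_1}$,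 $e_2\Downarrow\mathbf{Labeled}\,\ell_2\,v$, $\ell_2\sqsubseteq\ell_1$, $pc\sqsubseteq\ell_1$: result $()$ with store $\Sigma[\ell_1\mapsto\Sigma(\ell_1)[n\mapsto v]]$; (LabelOfRef) $e\Downarrow n_\ell$: result $\langle\Sigma,\mu,pc\sqcup\ell,\ell\rangle$. For $\mathbf{Ref}\,S$: (New-FS) $e\Downarrow\mathbf{Labeled}\,\ell\,v$, $pc\sqsubseteq\ell$, $n=|\mu|$: result $n$ with heap $\mu[n\mapsto\mathbf{Labeled}\,\ell\,v]$; (Read-FS) $e\Downarrow n$, $\mu[n]=\mathbf{Labeled}\,\ell\,v$: result $\langle\Sigma,\mu,pc\sqcup\ell,v\rangle$; (LabelOfRef-FS) $e\Downarrow n$, $\mu[n]=\mathbf{Labeled}\,\ell\,v$: result $\langle\Sigma,\mu,pc\sqcup\ell,\ell\rangle$; (Write-FS) $e_1\Downarrow n$, $e_2\Downarrow\mathbf{Labeled}\,\ell'\,v$, $\mu[n]=\mathbf{Labeled}\,\ell\,v_0$, $pc\sqsubseteq\ell$: result $()$ with heap $\mu[n\mapsto\mathbf{Labeled}\,(pc\sqcup\ell')\,v]$. Final configurations are $\langle\Sigma,\mu,pc,v\rangle$. A partial bijection is a finite injective partial function $\beta:\mathbb N\rightharpoonup\mathbb N$; $\beta\subseteq\beta'$ is inclusion of graphs. $A$-equivalence up to $\beta$ on values: $\mathbf{Labeled}\,\ell\,v_1\approx^\beta_A\mathbf{Labeled}\,\ell\,v_2$ if $\ell\sqsubseteq A$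 and $v_1\approx^\beta_A v_2$; $\mathbf{Labeled}\,\ell_1\,v_1\approx^\beta_A\mathbf{Labeled}\,\ell_2\,v_2$ if $\ell_1,\ell_2\not\sqsubseteq A$; $()$, labels: equal; injections and pairs homomorphically; function and thunk closures related if bodies are $\alpha$-equivalent and environments are related (same domain, pointwise); $n_\ell\approx n_\ell$ if $\ell\sqsubseteq A$; $(n_1)_{\ell_1}\approx(n_2)_{\ell_2}$ if $\ell_1,\ell_2\not\sqsubseteq A$; heap addresses $n_1\approx^\beta_A n_2$ iff $\beta(n_1)=n_2$. Memories at label $\ell$: always related if $\ell\not\sqsubseteq A$, else same length and pointwise related; stores pointwise. Heaps: $\mu_1\approx^\beta_A\mu_2$ iff $\mathrm{dom}(\beta)\subseteq\{0,\dots,|\mu_1|-1\}$, $\mathrm{rng}(\beta)\subseteq\{0,\dots,|\mu_2|-1\}$, and $\mu_1[n_1]\approx^\beta_A\mu_2[n_2]$ whenever $\beta(n_1)=n_2$. Initial configurations related iff stores and heaps related up to $\beta$, program counters equal, and expressions (resp. thunks) $\alpha$-equivalent. Final configurations $\langle\Sigma_1,\mu_1,pc_1,v_1\rangle\approx^\beta_A\langle\Sigma_2,\mu_2,pc_2,v_2\rangle$ iff stores and heaps are related up to $\beta$ and either $pc_1,pc_2\not\sqsubseteq A$, or $pc_1=pc_2\sqsubseteq A$ and $v_1\approx^\beta_A v_2$. Validity: $n\vdash\mathbf{Valid}(x)$ means every flow-sensitive heap address occurring in $x$ (including inside closures' environments and labeled values) is $<n$. $\vdash\mathbf{Valid}(\langle\Sigma,\mu,pc,e\rangle,\theta)$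 (likewise with a thunk) iff with $n=|\mu|$: $n\vdash\mathbf{Valid}(\Sigma)$, $n\vdash\mathbf{Valid}(\mu)$, $n\vdash\mathbf{Valid}(\theta)$. *)

(* Calculus lambda^{dCG} with flow-insensitive (Ref I) and
   flow-sensitive (Ref S) references; de Bruijn indices for variables. *)
From Stdlib Require List.
From HB Require Import structures.
From mathcomp Require Import all_boot all_order.
Set Implicit Arguments. Unset Strict Implicit. Unset Printing Implicit Defensive.
Import Order.LTheory.
Local Open Scope order_scope.

Section DCG.
Context {d : Order.disp_t} {L : latticeType d}.

Inductive reftag := RI | RS.

(* Expressions and thunks; variables are de Bruijn indices, so
   alpha-equivalence is syntactic equality. *)
Inductive expr : Type :=
| Var (x : nat)
| Lam (e : expr)
| App (e1 e2 : expr)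
| EUnit
| ELbl (l : L)
| EPair (e1 e2 : expr)
| Fst (e : expr)
| Snd (e : expr)
| EInl (e : expr)
| EInr (e : expr)
| Case (e e1 e2 : expr)              (* case(e, x.e1, x.e2) *)
| LeqQ (e1 e2 : expr)
| EThunk (t : thunk)
with thunk : Type :=
| Return (e : expr)
| Bind (e1 e2 : expr)                (* bind(e1, x.e2) *)
| Unlabel (e : expr)
| ToLabeled (e : expr)
| LabelOf (e : expr)
| GetLabel
| Taint (e : expr)
| New (s : reftag) (e : expr)
| Read (e : expr)
| Write (e1 e2 : expr)
| LabelOfRef (e : expr).

Inductive value : Type :=
| VUnit
| VClos (e : expr) (th : list value)
| VInl (v : value)
| VInr (v : value)
| VPair (v1 v2 : value)
| VLbl (l : L)
| VLabeled (l : L) (v : value)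
| VThunk (t : thunk) (th : list value)
| VRefI (n : nat) (l : L)
| VRefS (n : nat).

Definition env := list value.
Definition memory := list value.
Definition store := L -> memory.
Definition heap := list value.

(* X[n |-> y]: replacement, append when n = |X| (only used with n <= |X|) *)
Definition upd {T : Type} (X : list T) (n : nat) (y : T) : list T :=
  if (n < size X)%N then set_nth y X n y else rcons X y.

Definition supd (S : store) (l : L) (M : memory) : store :=
  fun l' => if l' == l then M else S l'.

Inductive eval (th : env) : expr -> value -> Prop :=
| EvVar x v : List.nth_error th x = Some v -> eval th (Var x) v
| EvUnit : eval th EUnit VUnit
| EvLbl l : eval th (ELbl l) (VLbl l)
| EvLam e : eval th (Lam e) (VClos e th)
| EvThunk t : eval th (EThunk t) (VThunk t th)
| EvApp e1 e2 e th' v2 v :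
    eval th e1 (VClos e th') -> eval th e2 v2 -> eval (v2 :: th') e v ->
    eval th (App e1 e2) v
| EvPair e1 e2 v1 v2 : eval th e1 v1 -> eval th e2 v2 -> eval th (EPair e1 e2) (VPair v1 v2)
| EvFst e v1 v2 : eval th e (VPair v1 v2) -> eval th (Fst e) v1
| EvSnd e v1 v2 : eval th e (VPair v1 v2) -> eval th (Snd e) v2
| EvInl e v : eval th e v -> eval th (EInl e) (VInl v)
| EvInr e v : eval th e v -> eval th (EInr e) (VInr v)
| EvCaseL e e1 e2 v1 v :
    eval th e (VInl v1) -> eval (v1 :: th) e1 v -> eval th (Case e e1 e2) v
| EvCaseR e e1 e2 v2 v :
    eval th e (VInr v2) -> eval (v2 :: th) e2 v -> eval th (Case e e1 e2) v
| EvLeqQ e1 e2 l1 l2 :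
    eval th e1 (VLbl l1) -> eval th e2 (VLbl l2) ->
    eval th (LeqQ e1 e2) (if l1 <= l2 then VInl VUnit else VInr VUnit).

Record cfg (X : Type) := Cfg { c_store : store; c_heap : heap; c_pc : L; c_term : X }.

Inductive force : cfg expr -> env -> cfg value -> Prop :=
| Force S m pc e th t th' c' :
    eval th e (VThunk t th') -> teval (Cfg S m pc t) th' c' ->
    force (Cfg S m pc e) th c'
with teval : cfg thunk -> env -> cfg value -> Prop :=
| TReturn S m pc e th v :
    eval th e v -> teval (Cfg S m pc (Return e)) th (Cfg S m pc v)
| TBind S m pc e1 e2 th S' m' pc' v1 c :
    force (Cfg S m pc e1) th (Cfg S' m' pc' v1) ->
    force (Cfg S' m' pc' e2) (v1 :: th) c ->
    teval (Cfg S m pc (Bind e1 e2)) th c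
| TToLabeled S m pc e th S' m' pc' v :
    force (Cfg S m pc e) th (Cfg S' m' pc' v) ->
    teval (Cfg S m pc (ToLabeled e)) th (Cfg S' m' pc (VLabeled pc' v))
| TUnlabel S m pc e th l v :
    eval th e (VLabeled l v) ->
    teval (Cfg S m pc (Unlabel e)) th (Cfg S m (pc `|` l) v)
| TLabelOf S m pc e th l v :
    eval th e (VLabeled l v) ->
    teval (Cfg S m pc (LabelOf e)) th (Cfg S m (pc `|` l) (VLbl l))
| TGetLabel S m pc th :
    teval (Cfg S m pc GetLabel) th (Cfg S m pc (VLbl pc))
| TTaint S m pc e th l :
    eval th e (VLbl l) ->
    teval (Cfg S m pc (Taint e)) th (Cfg S m (pc `|` l) VUnit)
| TNew S m pc e th l v :
    eval th e (VLabeled l v) -> pc <= l ->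
    teval (Cfg S m pc (New RI e)) th
          (Cfg (supd S l (upd (S l) (size (S l)) v)) m pc (VRefI (size (S l)) l))
| TRead S m pc e th n l v :
    eval th e (VRefI n l) -> List.nth_error (S l) n = Some v ->
    teval (Cfg S m pc (Read e)) th (Cfg S m (pc `|` l) v)
| TWrite S m pc e1 e2 th n l1 l2 v :
    eval th e1 (VRefI n l1) -> eval th e2 (VLabeled l2 v) ->
    l2 <= l1 -> pc <= l1 -> (n <= size (S l1))%N ->
    teval (Cfg S m pc (Write e1 e2)) th
          (Cfg (supd S l1 (upd (S l1) n v)) m pc VUnit)
| TLabelOfRef S m pc e th n l :
    eval th e (VRefI n l) ->
    teval (Cfg S m pc (LabelOfRef e)) th (Cfg S m (pc `|` l) (VLbl l))
| TNewFS S m pc e th l v :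
    eval th e (VLabeled l v) -> pc <= l ->
    teval (Cfg S m pc (New RS e)) th
          (Cfg S (upd m (size m) (VLabeled l v)) pc (VRefS (size m)))
| TReadFS S m pc e th n l v :
    eval th e (VRefS n) -> List.nth_error m n = Some (VLabeled l v) ->
    teval (Cfg S m pc (Read e)) th (Cfg S m (pc `|` l) v)
| TLabelOfRefFS S m pc e th n l v :
    eval th e (VRefS n) -> List.nth_error m n = Some (VLabeled l v) ->
    teval (Cfg S m pc (LabelOfRef e)) th (Cfg S m (pc `|` l) (VLbl l))
| TWriteFS S m pc e1 e2 th n l' v l v0 :
    eval th e1 (VRefS n) -> eval th e2 (VLabeled l' v) ->
    List.nth_error m n = Some (VLabeled l v0) -> pc <= l ->
    teval (Cfg S m pc (Write e1 e2)) th
          (Cfg S (upd m n (VLabeled (pc `|` l') v)) pc VUnit).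

Definition pbij := nat -> option nat.
Definition is_pbij (b : pbij) : Prop :=
  (forall n1 n2 k, b n1 = Some k -> b n2 = Some k -> n1 = n2) /\
  (exists N, forall n, (N <= n)%N -> b n = None).
Definition pbij_incl (b b' : pbij) : Prop :=
  forall n k, b n = Some k -> b' n = Some k.

Inductive val_rel (b : pbij) (A : L) : value -> value -> Prop :=
| RLabeledLow l v1 v2 : l <= A -> val_rel b A v1 v2 ->
    val_rel b A (VLabeled l v1) (VLabeled l v2)
| RLabeledHigh l1 l2 v1 v2 : ~~ (l1 <= A) -> ~~ (l2 <= A) ->
    val_rel b A (VLabeled l1 v1) (VLabeled l2 v2)
| RUnit : val_rel b A VUnit VUnit
| RLbl l : val_rel b A (VLbl l) (VLbl l)
| RInl v1 v2 : val_rel b A v1 v2 -> val_rel b A (VInl v1) (VInl v2)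
| RInr v1 v2 : val_rel b A v1 v2 -> val_rel b A (VInr v1) (VInr v2)
| RPair v1 v2 w1 w2 : val_rel b A v1 v2 -> val_rel b A w1 w2 ->
    val_rel b A (VPair v1 w1) (VPair v2 w2)
| RClos e th1 th2 : List.Forall2 (val_rel b A) th1 th2 ->
    val_rel b A (VClos e th1) (VClos e th2)
| RThunk t th1 th2 : List.Forall2 (val_rel b A) th1 th2 ->
    val_rel b A (VThunk t th1) (VThunk t th2)
| RRefILow n l : l <= A -> val_rel b A (VRefI n l) (VRefI n l)
| RRefIHigh n1 n2 l1 l2 : ~~ (l1 <= A) -> ~~ (l2 <= A) ->
    val_rel b A (VRefI n1 l1) (VRefI n2 l2)
| RRefS n1 n2 : b n1 = Some n2 -> val_rel b A (VRefS n1) (VRefS n2).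

Definition env_rel (b : pbij) (A : L) (th1 th2 : env) : Prop :=
  List.Forall2 (val_rel b A) th1 th2.

Definition mem_rel (b : pbij) (A : L) (l : L) (M1 M2 : memory) : Prop :=
  l <= A -> List.Forall2 (val_rel b A) M1 M2.

Definition store_rel (b : pbij) (A : L) (S1 S2 : store) : Prop :=
  forall l, mem_rel b A l (S1 l) (S2 l).

Definition heap_rel (b : pbij) (A : L) (m1 m2 : heap) : Prop :=
  (forall n k, b n = Some k -> (n < size m1)%N) /\
  (forall n k, b n = Some k -> (k < size m2)%N) /\
  (forall n k, b n = Some k -> val_rel b A (nth VUnit m1 n) (nth VUnit m2 k)).

Definition init_rel {X : Type} (b : pbij) (A : L) (c1 c2 : cfg X) : Prop :=
  store_rel b A (c_store c1) (c_store c2) /\ heap_rel b A (c_heap c1) (c_heap c2) /\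
  c_pc c1 = c_pc c2 /\ c_term c1 = c_term c2.

Definition final_rel (b : pbij) (A : L) (c1 c2 : cfg value) : Prop :=
  store_rel b A (c_store c1) (c_store c2) /\ heap_rel b A (c_heap c1) (c_heap c2) /\
  ((~~ (c_pc c1 <= A) /\ ~~ (c_pc c2 <= A)) \/
   (c_pc c1 = c_pc c2 /\ c_pc c1 <= A /\ val_rel b A (c_term c1) (c_term c2))).

Inductive valid_val (n : nat) : value -> Prop :=
| VdUnit : valid_val n VUnit
| VdClos e th : List.Forall (valid_val n) th -> valid_val n (VClos e th)
| VdInl v : valid_val n v -> valid_val n (VInl v)
| VdInr v : valid_val n v -> valid_val n (VInr v)
| VdPair v1 v2 : valid_val n v1 -> valid_val n v2 -> valid_val n (VPair v1 v2)
| VdLbl l : valid_val n (VLbl l)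
| VdLabeled l v : valid_val n v -> valid_val n (VLabeled l v)
| VdThunk t th : List.Forall (valid_val n) th -> valid_val n (VThunk t th)
| VdRefI k l : valid_val n (VRefI k l)
| VdRefS k : (k < n)%N -> valid_val n (VRefS k).

Definition valid_cfg {X : Type} (c : cfg X) (th : env) : Prop :=
  let n := size (c_heap c) in
  (forall l, List.Forall (valid_val n) (c_store c l)) /\
  List.Forall (valid_val n) (c_heap c) /\
  List.Forall (valid_val n) th.

End DCG.

(* While the program counter is below A, both runs take the same rule: pure
   evaluation maps related environments to related values, and each rule
   preserves the relation, allocation of a flow-sensitive cell extending the
   bijection by the pair of fresh addresses.  Once the program counter rises
   above A the runs may diverge, but each of them is confined: by the
   no-sensitive-upgrade checks (pc <= l) it leaves every memory below A alone,
   and it changes existing heap cells only by replacing a high labeled value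
   with another high one.  Hence the stores and heaps stay related, and both
   final program counters are high. *)

From mathcomp Require Import all_boot all_order.
From Stdlib Require List.
Set Implicit Arguments. Unset Strict Implicit.
Import Order.LTheory.
Local Open Scope order_scope.

Section Forall2Facts.
Variables (T U : Type) (R : T -> U -> Prop).

Lemma Forall2_size s1 s2 : List.Forall2 R s1 s2 -> size s1 = size s2.
Proof. by elim=> //= x y s1' s2' _ _ ->. Qed.

Lemma Forall2_nth_error s1 s2 n x : List.Forall2 R s1 s2 ->
  List.nth_error s1 n = Some x -> exists2 y, List.nth_error s2 n = Some y & R x y.
Proof.
move=> H; elim: H n => [|x1 y1 s1' s2' Rxy _ IH] [|n] //=; last exact: IH.
by case=> <-; exists y1.
Qed.

Lemma Forall2_set_nth s1 s2 n x y : List.Forall2 R s1 s2 -> R x y ->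
  (n < size s1)%N -> List.Forall2 R (set_nth x s1 n x) (set_nth y s2 n y).
Proof.
move=> H Rxy; elim: H n => [|x1 y1 s1' s2' Rx1 H IH] [|n] //= Hn.
all: by constructor; auto.
Qed.

Lemma Forall2_rcons s1 s2 x y : List.Forall2 R s1 s2 -> R x y ->
  List.Forall2 R (rcons s1 x) (rcons s2 y).
Proof. by move=> H Rxy; elim: H => /= [|*]; do !constructor. Qed.

Lemma Forall2_upd s1 s2 n x y : List.Forall2 R s1 s2 -> R x y ->
  List.Forall2 R (upd s1 n x) (upd s2 n y).
Proof.
move=> H Rxy; rewrite /upd -(Forall2_size H).
by case: ifP => Hn; [apply: Forall2_set_nth | apply: Forall2_rcons].
Qed.

End Forall2Facts.

Lemma nth_error_nth_lt (T : Type) (s : seq T) n x x0 :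
  List.nth_error s n = Some x -> nth x0 s n = x /\ (n < size s)%N.
Proof. by elim: s n => [|y s IH] [|n] //= => [[->]|/IH]. Qed.

Lemma nth_set_nth_lt (T : Type) (s : seq T) n k y x0 : (n < size s)%N ->
  nth x0 (set_nth y s n y) k = if k == n then y else nth x0 s k.
Proof. by elim: s n k => [|z s IH] [|n] [|k] //= Hn; rewrite IH. Qed.

Scheme force_ind2 := Induction for force Sort Prop
  with teval_ind2 := Induction for teval Sort Prop.
Combined Scheme force_teval_ind from force_ind2, teval_ind2.

Section Noninterference.
Context {d : Order.disp_t} {L : latticeType d} (A : L).

Lemma pbij_incl_trans b1 b2 b3 :
  pbij_incl b1 b2 -> pbij_incl b2 b3 -> pbij_incl b1 b3.
Proof. by move=> H12 H23 n k /H12 /H23. Qed.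

Lemma val_rel_incl b b' v1 v2 :
  pbij_incl b b' -> val_rel b A v1 v2 -> val_rel b' A v1 v2.
Proof.
move=> Hi; move: v1 v2; fix IH 3 => v1 v2 H.
case: H => [||||||| e th1 th2 Hth | t th1 th2 Hth |||]; try by constructor; auto.
all: constructor; elim: Hth => [|x y s1 s2 Hxy _ IHs]; constructor; auto.
Qed.

Lemma env_rel_incl b b' th1 th2 :
  pbij_incl b b' -> env_rel b A th1 th2 -> env_rel b' A th1 th2.
Proof. by move=> Hi; elim=> [|*]; constructor; first exact: val_rel_incl Hi _. Qed.

Lemma store_rel_incl b b' S1 S2 :
  pbij_incl b b' -> store_rel b A S1 S2 -> store_rel b' A S1 S2.
Proof. by move=> Hi HS l /HS; apply: env_rel_incl. Qed.

Lemma eval_rel b th1 th2 e v1 v2 :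
  env_rel b A th1 th2 -> eval th1 e v1 -> eval th2 e v2 -> val_rel b A v1 v2.
Proof.
move=> Hth H1; elim: H1 th2 v2 Hth => {th1 e v1}
  [th x v Hx|th|th l|th e|th t|th e1 e2 e th' w v _ IH1 _ IH2 _ IH3
  |th e1 e2 v1 w1 _ IH1 _ IH2|th e v1 w1 _ IH|th e v1 w1 _ IH|th e v _ IH
  |th e v _ IH|th e e1 e2 v1 v _ IH _ IH1|th e e1 e2 v1 v _ IH _ IH2
  |th e1 e2 l1 l2 _ IH1 _ IH2] th2 v2 Hth H2; inversion H2; subst.
- by have [y Hy Rvy] := Forall2_nth_error Hth Hx; congruence.
1-4: by constructor.
- have Hf := IH1 _ _ Hth ltac:(eassumption).
  inversion Hf; subst; apply: IH3; last eassumption.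
  by constructor; eauto.
- by constructor; eauto.
- by have Hp := IH _ _ Hth ltac:(eassumption); inversion Hp.
- by have Hp := IH _ _ Hth ltac:(eassumption); inversion Hp.
- by constructor; eauto.
- by constructor; eauto.
- have Hp := IH _ _ Hth ltac:(eassumption).
  by inversion Hp; subst; apply: IH1; last eassumption; constructor.
- by have Hp := IH _ _ Hth ltac:(eassumption); inversion Hp.
- by have Hp := IH _ _ Hth ltac:(eassumption); inversion Hp.
- have Hp := IH _ _ Hth ltac:(eassumption).
  by inversion Hp; subst; apply: IH2; last eassumption; constructor.
- have Hl1 := IH1 _ _ Hth ltac:(eassumption).
  have Hl2 := IH2 _ _ Hth ltac:(eassumption).
  by inversion Hl1; inversion Hl2; subst; case: ifP; do !constructor.
Qed.

Lemma join_high_l pc l : ~~ (pc <= A) -> ~~ (pc `|` l <= A).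
Proof. by rewrite leUx => /negbTE->. Qed.

Lemma join_high_r pc l : ~~ (l <= A) -> ~~ (pc `|` l <= A).
Proof. by rewrite leUx andbC => /negbTE->. Qed.

Lemma le_high l1 l2 : ~~ (l1 <= A) -> l1 <= l2 -> ~~ (l2 <= A).
Proof. by move=> h1 le12; apply: contra h1 => /(le_trans le12). Qed.

Definition is_high (v : value) : bool :=
  if v is VLabeled l _ then ~~ (l <= A) else false.

Definition same_or_high (v v' : value) : Prop := v' = v \/ is_high v && is_high v'.

Definition confined (S S' : store) (m m' : heap) : Prop :=
  [/\ forall l, l <= A -> S' l = S l, (size m <= size m')%N &
      forall n, (n < size m)%N -> same_or_high (nth VUnit m n) (nth VUnit m' n)].

Lemma same_or_high_trans v v' v'' :
  same_or_high v v' -> same_or_high v' v'' -> same_or_high v v''.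
Proof.
move=> [->|/andP[hv hv']] [->|/andP[hv'2 hv'']]; [left | right..] => //.
- by rewrite hv'2 hv''.
- by rewrite hv hv'.
- by rewrite hv hv''.
Qed.

Lemma confined_refl S m : confined S S m m.
Proof. by split=> // n _; left. Qed.

Lemma confined_trans S S' S'' m m' m'' :
  confined S S' m m' -> confined S' S'' m' m'' -> confined S S'' m m''.
Proof.
move=> [HS1 Hsz1 Hm1] [HS2 Hsz2 Hm2]; split.
- by move=> l Hl; rewrite HS2 ?HS1.
- exact: leq_trans Hsz2.
- move=> n Hn; apply: same_or_high_trans (Hm1 n Hn) (Hm2 n _).
  exact: leq_trans Hn Hsz1.
Qed.

Lemma confined_supd S m l M : ~~ (l <= A) -> confined S (supd S l M) m m.
Proof.
move=> Hl; split=> // [l' Hl'|n _]; last by left.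
by rewrite /supd; case: eqP => // El'; move: Hl; rewrite -El' Hl'.
Qed.

Lemma confined_alloc S m x : confined S S m (upd m (size m) x).
Proof.
rewrite /upd ltnn; split=> // [|n Hn]; first by rewrite size_rcons.
by left; rewrite nth_rcons Hn.
Qed.

Lemma confined_write S m n l v0 l' v : List.nth_error m n = Some (VLabeled l v0) ->
  ~~ (l <= A) -> ~~ (l' <= A) -> confined S S m (upd m n (VLabeled l' v)).
Proof.
move=> /(nth_error_nth_lt VUnit)[Em Hn] Hl Hl'; rewrite /upd Hn.
split=> // [|k Hk]; first by rewrite size_set_nth leq_maxr.
rewrite nth_set_nth_lt //; case: eqP => [->|_]; last by left.
by right; rewrite Em /= Hl Hl'.
Qed.

Lemma confinement :
  (forall c th c', force c th c' -> ~~ (c_pc c <= A) ->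
     ~~ (c_pc c' <= A) /\ confined (c_store c) (c_store c') (c_heap c) (c_heap c')) /\
  (forall c th c', teval c th c' -> ~~ (c_pc c <= A) ->
     ~~ (c_pc c' <= A) /\ confined (c_store c) (c_store c') (c_heap c) (c_heap c')).
Proof.
apply: force_teval_ind => /=; intros.
all: try by split; [exact: join_high_l | exact: confined_refl].
all: try by split; [|exact: confined_refl].
- exact: H.
- have [Hpc' C1] := H H1; have [Hpc'' C2] := H0 Hpc'.
  by split=> //; apply: confined_trans C2.
- by have [_ C] := H H0.
- by split=> //; apply/confined_supd/(le_high H).
- by split=> //; apply/confined_supd/(le_high H).
- by split=> //; apply: confined_alloc.
- split=> //; apply: confined_write; first eassumption.
  + exact: le_high H _.
  + exact: join_high_l.
Qed.

Lemma val_rel_is_high b v1 v2 : val_rel b A v1 v2 -> is_high v1 = is_high v2.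
Proof. by case=> //= l1 l2 _ _ -> ->. Qed.

Lemma high_val_rel b v1 v2 : is_high v1 -> is_high v2 -> val_rel b A v1 v2.
Proof. by case: v1 => // l1 w1; case: v2 => // l2 w2 /= *; constructor. Qed.

Lemma same_or_high_rel b v1 v2 v1' v2' : val_rel b A v1 v2 ->
  same_or_high v1 v1' -> same_or_high v2 v2' -> val_rel b A v1' v2'.
Proof.
move=> Hv [->|/andP[h1 h1']] [->|/andP[h2 h2']] //; apply: high_val_rel => //.
- by rewrite (val_rel_is_high Hv).
- by rewrite -(val_rel_is_high Hv).
Qed.

Lemma confined_rel b S1 S2 m1 m2 S1' S2' m1' m2' :
  store_rel b A S1 S2 -> heap_rel b A m1 m2 ->
  confined S1 S1' m1 m1' -> confined S2 S2' m2 m2' ->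
  store_rel b A S1' S2' /\ heap_rel b A m1' m2'.
Proof.
move=> HS [dom [rng Hm]] [HS1 Hsz1 Hm1] [HS2 Hsz2 Hm2].
split; last split; last split.
- by move=> l Hl; rewrite HS1 ?HS2 //; apply: HS.
- by move=> n k /dom/leq_trans->.
- by move=> n k /rng/leq_trans->.
- move=> n k Hnk.
  exact: same_or_high_rel (Hm n k Hnk) (Hm1 n (dom _ _ Hnk)) (Hm2 k (rng _ _ Hnk)).
Qed.

Lemma store_rel_supd b S1 S2 l M1 M2 : store_rel b A S1 S2 ->
  mem_rel b A l M1 M2 -> store_rel b A (supd S1 l M1) (supd S2 l M2).
Proof. by move=> HS HM l'; rewrite /supd; case: eqP => [->|]. Qed.

Lemma store_rel_supd_high b S1 S2 l1 l2 M1 M2 : store_rel b A S1 S2 ->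
  ~~ (l1 <= A) -> ~~ (l2 <= A) -> store_rel b A (supd S1 l1 M1) (supd S2 l2 M2).
Proof.
move=> HS h1 h2 l Hl; rewrite /supd.
case: eqP => [El|_]; first by move: h1; rewrite -El Hl.
case: eqP => [El|_]; first by move: h2; rewrite -El Hl.
exact: HS.
Qed.

Lemma heap_rel_write b m1 m2 n1 n2 x1 x2 : is_pbij b -> heap_rel b A m1 m2 ->
  b n1 = Some n2 -> val_rel b A x1 x2 ->
  heap_rel b A (upd m1 n1 x1) (upd m2 n2 x2).
Proof.
move=> [inj _] [dom [rng Hm]] Hn12 Hx; rewrite /upd (dom _ _ Hn12) (rng _ _ Hn12).
split; last split.
- by move=> p k /dom /leq_trans; rewrite size_set_nth; apply; rewrite leq_maxr.
- by move=> p k /rng /leq_trans; rewrite size_set_nth; apply; rewrite leq_maxr.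
move=> p k Hpk; rewrite !nth_set_nth_lt ?(dom _ _ Hn12) ?(rng _ _ Hn12) //.
case: eqP => [Ep|Ep]; first by move: Hpk; rewrite Ep Hn12 => -[->]; rewrite eqxx.
case: eqP => [Ek|_]; last exact: Hm.
by case: Ep; apply: inj Hpk _; rewrite Hn12 Ek.
Qed.

Definition pbij_ext (b : pbij) (n k : nat) : pbij :=
  fun p => if p == n then Some k else b p.

Lemma pbij_incl_ext b n k : b n = None -> pbij_incl b (pbij_ext b n k).
Proof. by move=> Hn p k'; rewrite /pbij_ext; case: eqP => // ->; rewrite Hn. Qed.

Lemma is_pbij_ext b n k : is_pbij b -> (forall p, b p <> Some k) ->
  is_pbij (pbij_ext b n k).
Proof.
move=> [inj [N HN]] Hk; split.
- move=> p1 p2 k'; rewrite /pbij_ext.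
  case: eqP => [->|_]; case: eqP => [->|_] //; last exact: inj.
  + by move=> [<-] /Hk.
  + by move=> + [Ek]; rewrite -Ek => /Hk.
- exists (maxn N n.+1) => p; rewrite geq_max => /andP[/HN Hp Hnp].
  by rewrite /pbij_ext gtn_eqF.
Qed.

Lemma heap_rel_fresh b m1 m2 : heap_rel b A m1 m2 ->
  b (size m1) = None /\ forall p, b p <> Some (size m2).
Proof.
move=> [dom [rng _]]; split=> [|p /rng]; last by rewrite ltnn.
by case E: (b _) => [k|] //; move: (dom _ _ E); rewrite ltnn.
Qed.

Lemma heap_rel_alloc b m1 m2 x1 x2 : heap_rel b A m1 m2 -> val_rel b A x1 x2 ->
  heap_rel (pbij_ext b (size m1) (size m2)) A
    (upd m1 (size m1) x1) (upd m2 (size m2) x2).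
Proof.
move=> Hm Hx; have [fresh1 _] := heap_rel_fresh Hm.
have incl := pbij_incl_ext (size m2) fresh1.
move: Hm => [dom [rng Hm]]; rewrite /upd !ltnn.
split; [|split]=> p k; rewrite {1}/pbij_ext ?size_rcons.
- by case: eqP => [->|_ /dom /ltnW].
- by case: eqP => [_ [<-]|_ /rng /ltnW].
- case: eqP => [-> [<-]|_ Hpk].
    by rewrite !nth_rcons !ltnn !eqxx; apply: val_rel_incl incl Hx.
  rewrite !nth_rcons (dom _ _ Hpk) (rng _ _ Hpk).
  exact: val_rel_incl incl (Hm _ _ Hpk).
Qed.

Lemma val_rel_labeledP b l1 l2 v1 v2 :
  val_rel b A (VLabeled l1 v1) (VLabeled l2 v2) ->
  [/\ l1 <= A, l2 = l1 & val_rel b A v1 v2] \/ ~~ (l1 <= A) /\ ~~ (l2 <= A).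
Proof. by move=> Hv; inversion Hv; subst; [left|right]. Qed.

Lemma val_rel_refIP b n1 n2 l1 l2 :
  val_rel b A (VRefI n1 l1) (VRefI n2 l2) ->
  [/\ l1 <= A, l2 = l1 & n2 = n1] \/ ~~ (l1 <= A) /\ ~~ (l2 <= A).
Proof. by move=> Hv; inversion Hv; subst; [left|right]. Qed.

Lemma val_rel_refSP b n1 n2 : val_rel b A (VRefS n1) (VRefS n2) -> b n1 = Some n2.
Proof. by move=> Hv; inversion Hv. Qed.

Lemma val_rel_labeled_same b l v1 v2 :
  (l <= A -> val_rel b A v1 v2) -> val_rel b A (VLabeled l v1) (VLabeled l v2).
Proof. by case: (boolP (l <= A)) => Hl Hv; constructor; auto. Qed.

Lemma val_rel_labeled_join b pc l1 l2 v1 v2 :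
  val_rel b A (VLabeled l1 v1) (VLabeled l2 v2) ->
  val_rel b A (VLabeled (pc `|` l1) v1) (VLabeled (pc `|` l2) v2).
Proof.
move=> Hv; inversion Hv; subst; last by constructor; apply: join_high_r.
exact: val_rel_labeled_same.
Qed.

Lemma val_rel_labeled_lbl b l1 l2 v1 v2 :
  val_rel b A (VLabeled l1 v1) (VLabeled l2 v2) ->
  val_rel b A (VLabeled l1 (VLbl l1)) (VLabeled l2 (VLbl l2)).
Proof. by move=> Hv; inversion Hv; subst; do !constructor. Qed.

Lemma val_rel_labeled_of_final b c1 c2 : final_rel b A c1 c2 ->
  val_rel b A (VLabeled (c_pc c1) (c_term c1)) (VLabeled (c_pc c2) (c_term c2)).
Proof. by case=> _ [_ [[h1 h2]|[-> [Hpc Hv]]]]; constructor. Qed.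

Lemma final_rel_of_labeled b S1 S2 m1 m2 l1 l2 v1 v2 :
  store_rel b A S1 S2 -> heap_rel b A m1 m2 ->
  val_rel b A (VLabeled l1 v1) (VLabeled l2 v2) ->
  final_rel b A (Cfg S1 m1 l1 v1) (Cfg S2 m2 l2 v2).
Proof. by move=> HS Hm Hv; split=> //; split=> //=; inversion Hv; auto. Qed.

Lemma final_rel_of_confined (X : Type) b (c1 c2 : cfg X) c1' c2' :
  store_rel b A (c_store c1) (c_store c2) -> heap_rel b A (c_heap c1) (c_heap c2) ->
  ~~ (c_pc c1' <= A) /\ confined (c_store c1) (c_store c1') (c_heap c1) (c_heap c1') ->
  ~~ (c_pc c2' <= A) /\ confined (c_store c2) (c_store c2') (c_heap c2) (c_heap c2') ->
  final_rel b A c1' c2'.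
Proof.
move=> HS Hm [h1 C1] [h2 C2]; have [HS' Hm'] := confined_rel HS Hm C1 C2.
by split; last split; auto.
Qed.

Definition final_rel_ext (b : pbij) (c1 c2 : cfg value) : Prop :=
  exists b' : pbij, is_pbij b' /\ pbij_incl b b' /\ final_rel b' A c1 c2.

Lemma final_rel_ext_refl b c1 c2 :
  is_pbij b -> final_rel b A c1 c2 -> final_rel_ext b c1 c2.
Proof. by exists b; split; last split. Qed.

Lemma final_rel_ext_incl b b' c1 c2 :
  pbij_incl b b' -> final_rel_ext b' c1 c2 -> final_rel_ext b c1 c2.
Proof.
move=> Hi [b'' [Hb'' [Hi' Hf]]]; exists b''.
by split=> //; split=> //; apply: pbij_incl_trans Hi'.
Qed.

Lemma heap_rel_nth_error b m1 m2 n1 n2 x1 x2 : heap_rel b A m1 m2 ->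
  b n1 = Some n2 -> List.nth_error m1 n1 = Some x1 ->
  List.nth_error m2 n2 = Some x2 -> val_rel b A x1 x2.
Proof.
move=> [_ [_ Hm]] /Hm.
by move=> + /(nth_error_nth_lt VUnit)[<- _] /(nth_error_nth_lt VUnit)[<- _].
Qed.

Definition low_related b S1 S2 m1 m2 (pc : L) th1 th2 : Prop :=
  [/\ is_pbij b, store_rel b A S1 S2, heap_rel b A m1 m2, pc <= A & env_rel b A th1 th2].

Section LowStep.
Variables (b : pbij) (S1 S2 : store (L:=L)) (m1 m2 : heap (L:=L)) (pc : L)
  (th1 th2 : env (L:=L)).
Hypothesis Hlow : low_related b S1 S2 m1 m2 pc th1 th2.

Ltac relate := repeat match goal with
  | Hth : env_rel _ _ th1 th2, H1 : eval th1 ?e _, H2 : eval th2 ?e _ |- _ =>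
      let Hr := fresh "Hr" in have Hr := eval_rel Hth H1 H2; clear H1 H2
  end.

(* The last line discards the pairs of runs that used the rules for different
   kinds of references: their reference values cannot be related. *)
Ltac invert_steps :=
  destruct Hlow as [Hb HS Hm Hpc Hth];
  intros H1 H2; inversion H1; subst; clear H1; inversion H2; subst; clear H2; relate;
  try by match goal with Hr : val_rel _ _ _ _ |- _ => solve [inversion Hr] end.

Lemma final_rel_ext_join l1 l2 v1 v2 :
  val_rel b A (VLabeled l1 v1) (VLabeled l2 v2) ->
  final_rel_ext b (Cfg S1 m1 (pc `|` l1) v1) (Cfg S2 m2 (pc `|` l2) v2).
Proof.
have [Hb HS Hm _ _] := Hlow.
move=> Hv; apply: final_rel_ext_refl => //.
exact/final_rel_of_labeled/val_rel_labeled_join.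
Qed.

Lemma final_rel_ext_low S1' S2' m1' m2' v1 v2 :
  store_rel b A S1' S2' -> heap_rel b A m1' m2' -> val_rel b A v1 v2 ->
  final_rel_ext b (Cfg S1' m1' pc v1) (Cfg S2' m2' pc v2).
Proof.
have [Hb _ _ Hpc _] := Hlow.
move=> HS' Hm' Hv; apply: final_rel_ext_refl => //.
by apply: final_rel_of_labeled => //; constructor.
Qed.

Lemma return_ni e c1 c2 : teval (Cfg S1 m1 pc (Return e)) th1 c1 ->
  teval (Cfg S2 m2 pc (Return e)) th2 c2 -> final_rel_ext b c1 c2.
Proof. by invert_steps; apply: final_rel_ext_low. Qed.

Lemma getLabel_ni c1 c2 : teval (Cfg S1 m1 pc GetLabel) th1 c1 ->
  teval (Cfg S2 m2 pc GetLabel) th2 c2 -> final_rel_ext b c1 c2.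
Proof. by invert_steps; apply: final_rel_ext_low => //; constructor. Qed.

Lemma unlabel_ni e c1 c2 : teval (Cfg S1 m1 pc (Unlabel e)) th1 c1 ->
  teval (Cfg S2 m2 pc (Unlabel e)) th2 c2 -> final_rel_ext b c1 c2.
Proof. by invert_steps; apply: final_rel_ext_join. Qed.

Lemma labelOf_ni e c1 c2 : teval (Cfg S1 m1 pc (LabelOf e)) th1 c1 ->
  teval (Cfg S2 m2 pc (LabelOf e)) th2 c2 -> final_rel_ext b c1 c2.
Proof. by invert_steps; apply: final_rel_ext_join; apply: val_rel_labeled_lbl Hr. Qed.

Lemma taint_ni e c1 c2 : teval (Cfg S1 m1 pc (Taint e)) th1 c1 ->
  teval (Cfg S2 m2 pc (Taint e)) th2 c2 -> final_rel_ext b c1 c2.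
Proof.
invert_steps; match goal with Hl : val_rel _ _ (VLbl _) _ |- _ => inversion Hl; subst end.
by apply: final_rel_ext_join; apply: val_rel_labeled_same; constructor.
Qed.

Lemma new_ni s e c1 c2 : teval (Cfg S1 m1 pc (New s e)) th1 c1 ->
  teval (Cfg S2 m2 pc (New s e)) th2 c2 -> final_rel_ext b c1 c2.
Proof.
case: s; invert_steps.
- case/val_rel_labeledP: Hr => [[Hl -> Hv]|[h1 h2]].
  + have HM := HS _ Hl; rewrite -(Forall2_size HM).
    apply: final_rel_ext_low => //; last by constructor.
    by apply: store_rel_supd => // _; apply: Forall2_upd.
  + apply: final_rel_ext_low => //; last by constructor.
    exact: store_rel_supd_high.
- have [fresh1 fresh2] := heap_rel_fresh Hm.
  have incl := pbij_incl_ext (size m2) fresh1.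
  exists (pbij_ext b (size m1) (size m2)); split; first exact: is_pbij_ext.
  split=> //; apply: final_rel_of_labeled.
  + exact: store_rel_incl incl HS.
  + exact: heap_rel_alloc.
  + by do 2!constructor => //; rewrite /pbij_ext eqxx.
Qed.

Lemma read_ni e c1 c2 : teval (Cfg S1 m1 pc (Read e)) th1 c1 ->
  teval (Cfg S2 m2 pc (Read e)) th2 c2 -> final_rel_ext b c1 c2.
Proof.
invert_steps.
- apply: final_rel_ext_join.
  case/val_rel_refIP: Hr => [[Hl El En]|[h1 h2]]; last by constructor.
  subst; have [w Hw Hvw] := Forall2_nth_error (HS _ Hl) ltac:(eassumption).
  by apply: val_rel_labeled_same; congruence.
- apply: final_rel_ext_join.
  by apply: (heap_rel_nth_error Hm (val_rel_refSP Hr)); eassumption.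
Qed.

Lemma labelOfRef_ni e c1 c2 : teval (Cfg S1 m1 pc (LabelOfRef e)) th1 c1 ->
  teval (Cfg S2 m2 pc (LabelOfRef e)) th2 c2 -> final_rel_ext b c1 c2.
Proof.
invert_steps.
- apply: final_rel_ext_join.
  case/val_rel_refIP: Hr => [[Hl -> _]|[h1 h2]]; last by constructor.
  by apply: val_rel_labeled_same; constructor.
- apply/final_rel_ext_join/val_rel_labeled_lbl.
  by apply: (heap_rel_nth_error Hm (val_rel_refSP Hr)); eassumption.
Qed.

Lemma write_ni e1 e2 c1 c2 : teval (Cfg S1 m1 pc (Write e1 e2)) th1 c1 ->
  teval (Cfg S2 m2 pc (Write e1 e2)) th2 c2 -> final_rel_ext b c1 c2.
Proof.
invert_steps.
- apply: final_rel_ext_low => //; last by constructor.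
  have [[Hl El En]|[h1 h2]] := val_rel_refIP ltac:(eassumption); last first.
    exact: store_rel_supd_high.
  subst; apply: store_rel_supd => // _; apply: Forall2_upd; first exact: HS.
  have [[_ _ //]|[hl _]] := val_rel_labeledP ltac:(eassumption).
  by move: hl; rewrite (le_trans _ Hl).
- apply: final_rel_ext_low => //; last by constructor.
  apply: heap_rel_write => //; first exact: val_rel_refSP.
  exact: val_rel_labeled_join.
Qed.

End LowStep.

Lemma force_inv S m (pc : L) e th c : force (Cfg S m pc e) th c ->
  exists t th', eval th e (VThunk t th') /\ teval (Cfg S m pc t) th' c.
Proof. by move=> H; inversion H; subst; exists t, th'. Qed.

Lemma teval_bind_inv S m (pc : L) e1 e2 th c : teval (Cfg S m pc (Bind e1 e2)) th c ->
  exists S' m' pc' v, force (Cfg S m pc e1) th (Cfg S' m' pc' v) /\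
                      force (Cfg S' m' pc' e2) (v :: th) c.
Proof. by move=> H; inversion H; subst; exists S', m', pc', v1. Qed.

Lemma teval_toLabeled_inv S m (pc : L) e th c : teval (Cfg S m pc (ToLabeled e)) th c ->
  exists S' m' pc' v, force (Cfg S m pc e) th (Cfg S' m' pc' v) /\
                      c = Cfg S' m' pc (VLabeled pc' v).
Proof. by move=> H; inversion H; subst; exists S', m', pc', v. Qed.

Lemma val_rel_thunkP b t1 t2 th1 th2 : val_rel b A (VThunk t1 th1) (VThunk t2 th2) ->
  t2 = t1 /\ env_rel b A th1 th2.
Proof. by move=> Hv; inversion Hv. Qed.

Lemma force_high_final_rel b c1 c2 th1 th2 c1' c2' :
  force c1 th1 c1' -> force c2 th2 c2' ->
  store_rel b A (c_store c1) (c_store c2) -> heap_rel b A (c_heap c1) (c_heap c2) ->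
  ~~ (c_pc c1 <= A) -> ~~ (c_pc c2 <= A) -> final_rel b A c1' c2'.
Proof.
move=> H1 H2 HS Hm h1 h2.
exact: final_rel_of_confined HS Hm (confinement.1 _ _ _ H1 h1) (confinement.1 _ _ _ H2 h2).
Qed.

Lemma teval_high_final_rel b c1 c2 th1 th2 c1' c2' :
  teval c1 th1 c1' -> teval c2 th2 c2' ->
  store_rel b A (c_store c1) (c_store c2) -> heap_rel b A (c_heap c1) (c_heap c2) ->
  ~~ (c_pc c1 <= A) -> ~~ (c_pc c2 <= A) -> final_rel b A c1' c2'.
Proof.
move=> H1 H2 HS Hm h1 h2.
exact: final_rel_of_confined HS Hm (confinement.2 _ _ _ H1 h1) (confinement.2 _ _ _ H2 h2).
Qed.

Local Tactic Notation "low_step" open_constr(step_ni) open_constr(rule) :=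
  move=> *; eapply step_ni; [eassumption | eapply rule; eassumption | eassumption].

Lemma low_pc_ni :
  (forall c1 th1 c1', force c1 th1 c1' -> forall b S2 m2 th2 c2',
     low_related b (c_store c1) S2 (c_heap c1) m2 (c_pc c1) th1 th2 ->
     force (Cfg S2 m2 (c_pc c1) (c_term c1)) th2 c2' -> final_rel_ext b c1' c2') /\
  (forall c1 th1 c1', teval c1 th1 c1' -> forall b S2 m2 th2 c2',
     low_related b (c_store c1) S2 (c_heap c1) m2 (c_pc c1) th1 th2 ->
     teval (Cfg S2 m2 (c_pc c1) (c_term c1)) th2 c2' -> final_rel_ext b c1' c2').
Proof.
apply: force_teval_ind => /=.
- move=> S1 m1 pc e th1 t th1' c1' He _ IH b S2 m2 th2 c2' [Hb HS Hm Hpc Hth].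
  case/force_inv=> t2 [th2' [He2 H2]].
  have [Et Hth'] := val_rel_thunkP (eval_rel Hth He He2); subst t2.
  by apply: (IH _ _ _ _ _ _ H2); split.
- by low_step return_ni TReturn.
- move=> S1 m1 pc e1 e2 th1 S1' m1' pc1' v1 c1' _ IH1 H1' IH2 b S2 m2 th2 c2' Hlow.
  have [Hb HS Hm Hpc Hth] := Hlow.
  case/teval_bind_inv=> S2' [m2' [pc2' [v2 [H21 H22]]]].
  have [b1 [Hb1 [Hi1 [HS1 [Hm1 Hres]]]]] := IH1 b _ _ _ _ Hlow H21.
  apply: (final_rel_ext_incl Hi1); case: Hres H22 => /= [[h1 h2]|[<- [Hpc1 Hv]]] H22.
    by apply: final_rel_ext_refl => //; apply: force_high_final_rel H1' H22 HS1 Hm1 h1 h2.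
  apply: (IH2 _ _ _ _ _ _ H22); split=> //.
  by constructor; last exact: env_rel_incl Hi1 Hth.
- move=> S1 m1 pc e th1 S1' m1' pc1' v1 _ IH b S2 m2 th2 c2' Hlow.
  case/teval_toLabeled_inv=> S2' [m2' [pc2' [v2 [H2 ->]]]].
  have [b1 [Hb1 [Hi1 Hf]]] := IH b _ _ _ _ Hlow H2.
  exists b1; split=> //; split=> //; case: (Hf) => HS1 [Hm1 _].
  apply: final_rel_of_labeled => //; constructor; first by case: Hlow.
  exact: val_rel_labeled_of_final Hf.
- by low_step unlabel_ni TUnlabel.
- by low_step labelOf_ni TLabelOf.
- by low_step getLabel_ni TGetLabel.
- by low_step taint_ni TTaint.
- by low_step new_ni TNew.
- by low_step read_ni TRead.
- by low_step write_ni TWrite.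
- by low_step labelOfRef_ni TLabelOfRef.
- by low_step new_ni TNewFS.
- by low_step read_ni TReadFS.
- by low_step labelOfRef_ni TLabelOfRefFS.
- by low_step write_ni TWriteFS.
Qed.

Lemma force_ni b c1 c2 th1 th2 c1' c2' : is_pbij b -> init_rel b A c1 c2 ->
  env_rel b A th1 th2 -> force c1 th1 c1' -> force c2 th2 c2' -> final_rel_ext b c1' c2'.
Proof.
case: c2 => S2 m2 pc2 e2 Hb [/= HS [Hm [<- <-]]] Hth H1 H2.
have [Hpc|Hpc] := boolP (c_pc c1 <= A).
  by apply: (low_pc_ni.1 _ _ _ H1 _ _ _ _ _ _ H2); split.
by apply: final_rel_ext_refl => //; exact: (force_high_final_rel H1 H2 HS Hm Hpc Hpc).
Qed.

Lemma teval_ni b c1 c2 th1 th2 c1' c2' : is_pbij b -> init_rel b A c1 c2 ->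
  env_rel b A th1 th2 -> teval c1 th1 c1' -> teval c2 th2 c2' -> final_rel_ext b c1' c2'.
Proof.
case: c2 => S2 m2 pc2 t2 Hb [/= HS [Hm [<- <-]]] Hth H1 H2.
have [Hpc|Hpc] := boolP (c_pc c1 <= A).
  by apply: (low_pc_ni.2 _ _ _ H1 _ _ _ _ _ _ H2); split.
by apply: final_rel_ext_refl => //; exact: (teval_high_final_rel H1 H2 HS Hm Hpc Hpc).
Qed.

End Noninterference.

Theorem mainTheorem4 (d : Order.disp_t) (L : latticeType d) (A : L) :
  (forall (b : pbij) (c1 c2 : cfg expr) (th1 th2 : env) (c1' c2' : cfg value),
      is_pbij b -> valid_cfg c1 th1 -> valid_cfg c2 th2 ->
      init_rel b A c1 c2 -> env_rel b A th1 th2 ->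
      force c1 th1 c1' -> force c2 th2 c2' ->
      exists b' : pbij, is_pbij b' /\ pbij_incl b b' /\ final_rel b' A c1' c2') /\
  (forall (b : pbij) (c1 c2 : cfg thunk) (th1 th2 : env) (c1' c2' : cfg value),
      is_pbij b -> valid_cfg c1 th1 -> valid_cfg c2 th2 ->
      init_rel b A c1 c2 -> env_rel b A th1 th2 ->
      teval c1 th1 c1' -> teval c2 th2 c2' ->
      exists b' : pbij, is_pbij b' /\ pbij_incl b b' /\ final_rel b' A c1' c2').
Proof.
split=> b c1 c2 th1 th2 c1' c2' Hb _ _; [exact: force_ni | exact: teval_ni].
Qed.
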